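(* Let $f,g\in\mathbb{F}[Y,Z]$. If $g=\sum_{i\in[r]}g_ih_i$ with $g_i\in\mathbb{F}[Y]$ and $h_i\in\mathbb{F}[Z]$, then $\mathrm{maxrank}(M_{fg})\le r\cdot\mathrm{maxrank}(M_f)$.
   Context: $\mathbb{F}$ is a field, $Y=\{y_1,\dots,y_m\}$ and $Z=\{z_1,\dots,z_m\}$ are disjoint sets of variables. For $f\in\mathbb{F}[Y,Z]$, the polynomial coefficient matrix $M_f$ is the $2^m\times 2^m$ matrix with entries in $\mathbb{F}[Y,Z]$, rows indexed by monic multilinear monomials $p$ in $Y$ and columns by monic multilinear monomials $q$ in $Z$, where $M_f(p,q)=G$ if and only if $f$ can be uniquely written as $f=pq\,G+Q$ with $G$ containing no variable other than those present in $p$ and $q$, and $Q$ having no monomial which is divisible by $pq$ and contains only variables present in $p$ and $q$. For $S:Y\cup Z\to\mathbb{F}$, $M_f|_S$ is obtained by evaluating each entry at $S$, and $\mathrm{maxrank}(M_f)=\max_S\mathrm{rank}(M_f|_S)$. *)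

From HB Require Import structures.
From mathcomp Require Import all_boot all_order all_algebra.
From mathcomp Require Import mpoly.
From Stdlib Require Import ClassicalDescription.

Set Implicit Arguments.
Unset Strict Implicit.
Unset Printing Implicit Defensive.

Import Order.TTheory GRing.Theory.
Local Open Scope ring_scope.

(* Variables of F[Y,Z]: the 2m variables are indexed by 'I_(m + m);
   y_i is the variable  lshift m i  and  z_i  is the variable  rshift m i. *)
Definition yvar (m : nat) (i : 'I_m) : 'I_(m + m) := lshift m i.
Definition zvar (m : nat) (i : 'I_m) : 'I_(m + m) := rshift m i.

Definition inY (F : fieldType) (m : nat) (p : {mpoly F[m + m]}) : Prop :=
  forall mu, mu \in msupp p -> forall i : 'I_m, mu (zvar i) = 0%N.

Definition inZ (F : fieldType) (m : nat) (p : {mpoly F[m + m]}) : Prop :=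
  forall mu, mu \in msupp p -> forall i : 'I_m, mu (yvar i) = 0%N.

(* A monic multilinear monomial p in Y is identified with the set A of
   indices of its variables (p = prod_{i in A} y_i), likewise q in Z with B.
   The variables present in p q: *)
Definition pqvars (m : nat) (A B : {set 'I_m}) : {set 'I_(m + m)} :=
  [set yvar i | i in A] :|: [set zvar j | j in B].

Definition pqmon (m : nat) (A B : {set 'I_m}) : 'X_{1..m + m} :=
  [multinom ((k \in pqvars A B) : nat) | k < m + m].

(* Entry M_f(p,q) = G, where f = p q G + Q, G only has variables among those
   of p q, and Q has no monomial divisible by p q using only variables of p q.
   G is therefore (1/pq) times the part of f made of the monomials that are
   divisible by pq and use only variables of pq: *)
Definition Mentry (F : fieldType) (m : nat) (f : {mpoly F[m + m]})
    (A B : {set 'I_m}) : {mpoly F[m + m]} :=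
  \sum_(mu <- msupp f |
        [forall k, (pqmon A B k <= mu k)%N && ((mu k != 0%N) ==> (k \in pqvars A B))])
     f@_mu *: 'X_[(mu - pqmon A B)%MM].

(* The polynomial coefficient matrix evaluated at S : Y u Z -> F.
   Rows/columns are indexed by the 2^m subsets of 'I_m (i.e. the monic
   multilinear monomials in Y, resp. Z), enumerated via enum_val. *)
Definition Meval (F : fieldType) (m : nat) (f : {mpoly F[m + m]})
    (S : 'I_(m + m) -> F) : 'M[F]_(#|{set 'I_m}|) :=
  \matrix_(i, j) (Mentry f (enum_val i) (enum_val j)).@[S].

(* maxrank(M_f) = max_S rank(M_f|_S); the rank is at most #|{set 'I_m}|, so the
   maximum of the attained values below that bound is taken. *)
Definition rank_attained (F : fieldType) (m : nat) (f : {mpoly F[m + m]})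
    (k : nat) : bool :=
  if excluded_middle_informative (exists S, \rank (Meval f S) = k)
  then true else false.

Definition maxrank (F : fieldType) (m : nat) (f : {mpoly F[m + m]}) : nat :=
  (\max_(k < (#|{set 'I_m}|).+1 | rank_attained f k) k)%N.

(* The (A,B) entry of M_f only depends on the monomials of f whose support is
   exactly the variable set V of y_A z_B, so we study the linear map
   [extract V] on F[X] sending x^mu to x^(mu - 1_V) when supp mu = V and to 0
   otherwise.  Since supp (mu + nu) = supp mu :|: supp nu, the extraction of a
   product splits along the support W of the monomials of the first factor.
   If the second factor lies in F[Y], only W with the same Z-part as V
   contribute, which makes M_(f g) = G *m M_f for a matrix G built from g;
   symmetrically M_(f h) = M_f *m H for h in F[Z].  Hence every evaluation of
   M_(f g_i h_i) has rank at most maxrank M_f, and rank is subadditive. *)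
From HB Require Import structures.
From mathcomp Require Import all_boot all_order all_algebra.
From mathcomp Require Import mpoly ssrcomplements zify.
From Stdlib Require Import ClassicalDescription.

Set Implicit Arguments.
Unset Strict Implicit.
Unset Printing Implicit Defensive.

Import Order.TTheory GRing.Theory.
Local Open Scope ring_scope.

Section LinearExtension.
Variables (F : fieldType) (n : nat) (V : lmodType F).
Variable phi : 'X_{1..n} -> V.

Definition mlinext (p : {mpoly F[n]}) : V :=
  \sum_(mu <- msupp p) p@_mu *: phi mu.

Lemma mlinext_bounded k p : (msize p <= k)%N ->
  mlinext p = \sum_(mu : 'X_{1..n < k}) p@_mu *: phi mu.
Proof.
move=> le_pk; rewrite /mlinext (big_mksub 'X_{1..n < k}) ?msupp_uniq //=.
- by rewrite big_rmcond //= => mu /memN_msupp_eq0 ->; rewrite scale0r.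
- by move=> mu /msize_mdeg_lt /leq_trans; apply.
Qed.

Lemma mlinextD p q : mlinext (p + q) = mlinext p + mlinext q.
Proof.
pose k := maxn (msize p) (msize q).
have le_pqk : (msize (p + q) <= k)%N.
  by apply: leq_trans (msizeD_le _ _) _; rewrite geq_max leq_maxl leq_maxr.
rewrite (mlinext_bounded le_pqk) (@mlinext_bounded k p) ?leq_maxl //.
rewrite (@mlinext_bounded k q) ?leq_maxr // -big_split /=.
by apply: eq_bigr => mu _; rewrite mcoeffD scalerDl.
Qed.

Lemma mlinext0 : mlinext 0 = 0.
Proof. by rewrite /mlinext msupp0 big_nil. Qed.

Lemma mlinextZ a p : mlinext (a *: p) = a *: mlinext p.
Proof.
rewrite (@mlinext_bounded (msize p) (a *: p)) ?msizeZ_le //.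
rewrite (@mlinext_bounded (msize p) p) // scaler_sumr.
by apply: eq_bigr => mu _; rewrite mcoeffZ scalerA.
Qed.

Lemma mlinextX mu : mlinext 'X_[mu] = phi mu.
Proof. by rewrite /mlinext msuppX big_seq1 mcoeffX eqxx scale1r. Qed.

Lemma mlinext_sum I (s : seq I) (P : pred I) (G : I -> {mpoly F[n]}) :
  mlinext (\sum_(i <- s | P i) G i) = \sum_(i <- s | P i) mlinext (G i).
Proof. exact: (big_morph mlinext mlinextD mlinext0). Qed.

End LinearExtension.

Section SupportExtraction.
Variables (F : fieldType) (n : nat).

Definition mnmsupp (mu : 'X_{1..n}) : {set 'I_n} := [set k | mu k != 0%N].

Definition mnmind (U : {set 'I_n}) : 'X_{1..n} :=
  [multinom ((k \in U) : nat) | k < n].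

Definition extract_mono (U : {set 'I_n}) (mu : 'X_{1..n}) : {mpoly F[n]} :=
  if mnmsupp mu == U then 'X_[(mu - mnmind U)%MM] else 0.

(* What a monomial x^nu of the second factor contributes to [extract U] of a
   product whose first factor is supported on W. *)
Definition transfer_mono (W U : {set 'I_n}) (nu : 'X_{1..n}) : {mpoly F[n]} :=
  if W :|: mnmsupp nu == U then 'X_[(nu - mnmind (U :\: W))%MM] else 0.

Definition extract U := mlinext (extract_mono U).
Definition transfer W U := mlinext (transfer_mono W U).

Lemma mnmsuppD mu nu : mnmsupp (mu + nu)%MM = mnmsupp mu :|: mnmsupp nu.
Proof. by apply/setP => k; rewrite !inE mnmDE addn_eq0 negb_and. Qed.

Lemma extract_monoD U mu nu :
  extract_mono U (mu + nu)%MM =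
  \sum_(W : {set 'I_n}) extract_mono W mu * transfer_mono W U nu.
Proof.
rewrite (bigD1 (mnmsupp mu)) //= big1 ?addr0; last first.
  by move=> W /negbTE; rewrite /extract_mono eq_sym => ->; rewrite mul0r.
rewrite /extract_mono /transfer_mono eqxx mnmsuppD.
case: eqP => [defU|_]; last by rewrite mulr0.
rewrite -mpolyXD; congr 'X_[_]; apply/mnmP => k.
rewrite !(mnmDE, mnmBE, mnmE) -defU !inE.
by case: (mu k) => [|a]; case: (nu k) => [|b] /=; lia.
Qed.

Lemma extractM U f g :
  extract U (f * g) = \sum_(W : {set 'I_n}) extract W f * transfer W U g.
Proof.
rewrite {1}(mpolyE f) {1}(mpolyE g) mulr_suml /extract mlinext_sum.
under eq_bigr do rewrite mulr_sumr mlinext_sum.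
under [RHS]eq_bigr do rewrite /mlinext mulr_suml.
rewrite [RHS]exchange_big /=; apply: eq_bigr => mu _.
under [RHS]eq_bigr do rewrite mulr_sumr.
rewrite [RHS]exchange_big /=; apply: eq_bigr => nu _.
rewrite -scalerAl -scalerAr scalerA -mpolyXD mlinextZ mlinextX extract_monoD.
by rewrite scaler_sumr; apply: eq_bigr => W _; rewrite -scalerAl -scalerAr scalerA.
Qed.

End SupportExtraction.

Section ComplementaryBlocks.
Variables (F : fieldType) (n p q : nat) (u : 'I_p -> 'I_n) (v : 'I_q -> 'I_n).
Hypotheses (u_inj : injective u) (v_inj : injective v).
Hypothesis uv_neq : forall i j, u i != v j.
Hypothesis uv_cover : forall k, (exists i, k = u i) \/ (exists j, k = v j).

Definition blockvars (A : {set 'I_p}) (B : {set 'I_q}) : {set 'I_n} :=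
  u @: A :|: v @: B.

Lemma u_notin_imv i (B : {set 'I_q}) : (u i \in v @: B) = false.
Proof. by apply/negbTE/imsetP => -[j _ /eqP]; rewrite (negbTE (uv_neq _ _)). Qed.

Lemma v_notin_imu j (A : {set 'I_p}) : (v j \in u @: A) = false.
Proof.
by apply/negbTE/imsetP => -[i _ /eqP]; rewrite eq_sym (negbTE (uv_neq _ _)).
Qed.

Lemma mem_blockvars_u i A B : (u i \in blockvars A B) = (i \in A).
Proof. by rewrite in_setU mem_imset // u_notin_imv orbF. Qed.

Lemma mem_blockvars_v j A B : (v j \in blockvars A B) = (j \in B).
Proof. by rewrite in_setU mem_imset // v_notin_imu. Qed.

Variable g : {mpoly F[n]}.
Hypothesis g_free_of_v : forall nu, nu \in msupp g -> forall j, nu (v j) = 0%N.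

Lemma v_notin_mnmsupp nu j : nu \in msupp g -> (v j \in mnmsupp nu) = false.
Proof. by move=> g_nu; rewrite inE g_free_of_v. Qed.

Lemma transfer_blockvars_other (W : {set 'I_n}) A1 A B :
  u @^-1: W = A1 -> W != blockvars A1 B -> transfer W (blockvars A B) g = 0.
Proof.
move=> eq_uW neq_W; rewrite /transfer /mlinext big1_seq // => nu /andP[_ g_nu].
rewrite /transfer_mono; case: eqP => [defU|_]; last by rewrite scaler0.
case/negP: neq_W; apply/eqP/setP => k; case: (uv_cover k) => [[i ->]|[j ->]].
  by move/setP: eq_uW => /(_ i); rewrite inE mem_blockvars_u.
by rewrite mem_blockvars_v -(mem_blockvars_v j A) -defU in_setU v_notin_mnmsupp ?orbF.
Qed.

Lemma transfer_blockvars A1 A B :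
  transfer (blockvars A1 B) (blockvars A B) g =
  transfer (blockvars A1 set0) (blockvars A set0) g.
Proof.
rewrite /transfer /mlinext; apply: eq_big_seq => nu g_nu; congr (_ *: _).
rewrite /transfer_mono.
have -> : blockvars A B :\: blockvars A1 B = blockvars A set0 :\: blockvars A1 set0.
  apply/setP => k; case: (uv_cover k) => [[i ->]|[j ->]];
  by rewrite !in_setD ?mem_blockvars_u ?mem_blockvars_v ?in_set0 ?andNb ?andbF.
suff -> : (blockvars A1 B :|: mnmsupp nu == blockvars A B) =
          (blockvars A1 set0 :|: mnmsupp nu == blockvars A set0) by [].
apply/eqP/eqP => /setP eqU; apply/setP => k; move: (eqU k);
case: (uv_cover k) => [[i ->]|[j ->]];
by rewrite !in_setU ?u_notin_imv ?v_notin_imu ?(mem_imset _ _ u_inj)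
  ?(mem_imset _ _ v_inj) ?imset0 ?in_set0 ?v_notin_mnmsupp ?orbF.
Qed.

Lemma extractM_blockvars f A B :
  extract (blockvars A B) (f * g) =
  \sum_(A1 : {set 'I_p})
     extract (blockvars A1 B) f * transfer (blockvars A1 set0) (blockvars A set0) g.
Proof.
rewrite extractM (partition_big (fun W : {set 'I_n} => u @^-1: W) xpredT) //=.
apply: eq_bigr => A1 _.
have uA1 : u @^-1: blockvars A1 B = A1.
  by apply/setP => i; rewrite inE mem_blockvars_u.
rewrite (bigD1 (blockvars A1 B)) ?uA1 //= big1 ?addr0 ?transfer_blockvars //.
move=> W /andP[/eqP uW neq_W].
by rewrite (transfer_blockvars_other A uW neq_W) mulr0.
Qed.

End ComplementaryBlocks.

Section CoefficientMatrix.
Variables (F : fieldType) (m : nat).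
Implicit Types (f g h : {mpoly F[m + m]}) (S : 'I_(m + m) -> F).

Lemma yvar_inj : injective (@yvar m). Proof. exact: lshift_inj. Qed.
Lemma zvar_inj : injective (@zvar m). Proof. exact: rshift_inj. Qed.
Lemma yvar_neq_zvar i j : @yvar m i != zvar j. Proof. by rewrite /yvar /zvar eq_lrshift. Qed.
Lemma zvar_neq_yvar i j : @zvar m i != yvar j. Proof. by rewrite /yvar /zvar eq_rlshift. Qed.

Lemma yvar_zvar_cover k : (exists i, k = @yvar m i) \/ (exists j, k = zvar j).
Proof. by rewrite -(splitK k); case: (split k) => a; [left|right]; exists a. Qed.

Lemma zvar_yvar_cover k : (exists i, k = @zvar m i) \/ (exists j, k = yvar j).
Proof. by case: (yvar_zvar_cover k); [right|left]. Qed.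

Lemma pqvars_yz A B : pqvars A B = blockvars (@yvar m) (@zvar m) A B.
Proof. by []. Qed.

Lemma pqvars_zy A B : pqvars A B = blockvars (@zvar m) (@yvar m) B A.
Proof. by rewrite /pqvars /blockvars setUC. Qed.

Lemma Mentry_extract f A B : Mentry f A B = extract (pqvars A B) f.
Proof.
rewrite /Mentry /extract /mlinext big_mkcond /=; apply: eq_bigr => mu _.
rewrite /extract_mono; set U := pqvars A B.
have -> : [forall k, (pqmon A B k <= mu k)%N && ((mu k != 0%N) ==> (k \in U))]
          = (mnmsupp mu == U).
  apply/forallP/eqP => [mu_U|defU k].
    apply/setP => k; have := mu_U k; rewrite /pqmon mnmE -/U [k \in mnmsupp mu]inE.
    by case: (k \in U); case: (mu k).
  by rewrite /pqmon mnmE -/U -defU [k \in mnmsupp mu]inE; case: (mu k).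
by case: ifP; rewrite ?scaler0.
Qed.

Lemma sum_enum_set (G : {set 'I_m} -> F) :
  \sum_(A : {set 'I_m}) G A = \sum_(a < #|{set 'I_m}|) G (enum_val a).
Proof.
rewrite (reindex (fun a : 'I_#|{set 'I_m}| => enum_val a)) //.
by apply: onW_bij; apply: enum_val_bij.
Qed.

Lemma Meval_mul_inY f g S : inY g ->
  Meval (f * g) S =
  (\matrix_(a, a1) (transfer (pqvars (enum_val a1) set0)
                             (pqvars (enum_val a) set0) g).@[S]) *m Meval f S.
Proof.
move=> gY; apply/matrixP => a b; rewrite !mxE Mentry_extract pqvars_yz.
rewrite (extractM_blockvars yvar_inj zvar_inj yvar_neq_zvar yvar_zvar_cover gY).
rewrite raddf_sum sum_enum_set; apply: eq_bigr => a1 _.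
by rewrite !mxE Mentry_extract /= mevalM mulrC.
Qed.

Lemma Meval_mul_inZ f h S : inZ h ->
  Meval (f * h) S =
  Meval f S *m (\matrix_(b1, b) (transfer (pqvars set0 (enum_val b1))
                                         (pqvars set0 (enum_val b)) h).@[S]).
Proof.
move=> hZ; apply/matrixP => a b; rewrite !mxE Mentry_extract pqvars_zy.
rewrite (extractM_blockvars zvar_inj yvar_inj zvar_neq_yvar zvar_yvar_cover hZ).
rewrite raddf_sum sum_enum_set; apply: eq_bigr => b1 _.
by rewrite !mxE Mentry_extract /= mevalM !pqvars_zy.
Qed.

Lemma Meval_sum r (P : 'I_r -> {mpoly F[m + m]}) S :
  Meval (\sum_(i < r) P i) S = \sum_(i < r) Meval (P i) S.
Proof.
apply/matrixP => a b; rewrite summxE !mxE Mentry_extract /extract mlinext_sum.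
by rewrite raddf_sum; apply: eq_bigr => i _; rewrite !mxE Mentry_extract.
Qed.

Lemma rank_Meval_le_maxrank f S : (\rank (Meval f S) <= maxrank f)%N.
Proof.
have lt_rank : (\rank (Meval f S) < #|{set 'I_m}|.+1)%N by rewrite ltnS rank_leq_row.
apply: (leq_bigmax_cond (F := fun k : 'I_ _ => nat_of_ord k) (Ordinal lt_rank)).
by rewrite /rank_attained; case: excluded_middle_informative => // [[]]; exists S.
Qed.

End CoefficientMatrix.

Lemma mxrank_sum_le (F : fieldType) (k l r : nat) (M : 'I_r -> 'M[F]_(k, l)) :
  (\rank (\sum_(i < r) M i)%R <= \sum_(i < r) \rank (M i))%N.
Proof.
apply: (big_ind2 (fun A a => \rank A <= a)%N) => [|A a B b le_Aa le_Bb|//].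
  by rewrite mxrank0.
exact: leq_trans (mxrank_add A B) (leq_add le_Aa le_Bb).
Qed.

Unset Implicit Arguments.
Set Strict Implicit.

Theorem corollary2 (F : fieldType) (m r : nat) (f g : {mpoly F[m + m]})
    (gs hs : 'I_r -> {mpoly F[m + m]}) :
  (forall i, inY (gs i)) -> (forall i, inZ (hs i)) ->
  g = \sum_(i < r) gs i * hs i ->
  (maxrank (f * g) <= r * maxrank f)%N.
Proof.
move=> gsY hsZ ->; apply/bigmax_leqP => k.
rewrite /rank_attained; case: excluded_middle_informative => // [[S rankS]] _.
rewrite -rankS mulr_sumr Meval_sum; apply: leq_trans (mxrank_sum_le _) _.
rewrite -[X in (_ <= X * _)%N]card_ord -sum_nat_const; apply: leq_sum => i _.
rewrite mulrA Meval_mul_inZ // Meval_mul_inY //.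
apply: leq_trans (mxrankM_maxl _ _) _; apply: leq_trans (mxrankM_maxr _ _) _.
exact: rank_Meval_le_maxrank.
Qed.
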